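(* For any finite graph $G$ with at least one edge, the family $\mathcal{C}(G)$ has Helly number $2$.
   Context: Let $X=\mathrm{MIS}(G)$ be the set of maximal independent sets of $G$; for $S\subseteq V(G)$ let $K_S=\{I\in X: S\subseteq I\}$; $\mathcal{C}(G)=\{K_S: S\subseteq V(G)\}$. The Helly number of a set system $\mathcal{F}$ is the minimum integer $h$ such that for every finite subfamily $\mathcal{G}\subseteq\mathcal{F}$, if every $h$ members of $\mathcal{G}$ have a common point, then all members of $\mathcal{G}$ have a common point. *)

From mathcomp Require Import all_boot.
Set Implicit Arguments. Unset Strict Implicit. Unset Printing Implicit Defensive.

Definition simple_graph (V : finType) (e : rel V) : Prop :=
  symmetric e /\ irreflexive e.

Definition independent (V : finType) (e : rel V) (I : {set V}) : bool :=
  [forall x in I, forall y in I, ~~ e x y].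

Definition MIS (V : finType) (e : rel V) : {set {set V}} :=
  [set I | maxset (independent e) I].

Definition K (V : finType) (e : rel V) (S : {set V}) : {set {set V}} :=
  [set I in MIS e | S \subset I].

Definition Cfam (V : finType) (e : rel V) : {set {set {set V}}} :=
  [set K e S | S : {set V}].

Definition has_common_point (T : finType) (H : {set {set T}}) : Prop :=
  exists x : T, forall A, A \in H -> x \in A.

Definition helly_prop (T : finType) (F : {set {set T}}) (h : nat) : Prop :=
  forall Gs : {set {set T}}, Gs \subset F ->
    (forall H : {set {set T}}, H \subset Gs -> #|H| <= h -> has_common_point H) ->
    has_common_point Gs.

Definition helly_number_is (T : finType) (F : {set {set T}}) (h : nat) : Prop :=
  helly_prop F h /\ forall h', helly_prop F h' -> h <= h'.

From mathcomp Require Import all_boot.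

(* K_S :&: K_T = K_(S :|: T), and K_S is nonempty exactly when S is
   independent.  Independence is a condition on pairs of vertices, so if the
   members K_S of a subfamily meet pairwise, the union of all their S is
   independent, and any maximal independent set containing it lies in every
   member.  Helly number 1 fails: for an edge uv, K_{u} and K_{v} are both
   nonempty but disjoint. *)

Set Implicit Arguments. Unset Strict Implicit. Unset Printing Implicit Defensive.

Section HellyProperty.
Variable T : finType.
Implicit Types (A B : {set T}) (F : {set {set T}}).

Lemma helly_propW F h h' : h <= h' -> helly_prop F h -> helly_prop F h'.
Proof.
move=> le_hh' hF Gs sGsF hGs; apply: hF => // H sHGs cardH.
by apply: hGs => //; apply: leq_trans le_hh'.
Qed.

Lemma helly_prop1_meet F A B :
  helly_prop F 1 -> A \in F -> B \in F -> A != set0 -> B != set0 ->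
  A :&: B != set0.
Proof.
move=> hF AF BF /set0Pn [a aA] /set0Pn [b bB].
have sABF : [set A; B] \subset F by apply/subsetP => C /set2P [] ->.
have [x hx] : has_common_point [set A; B].
  apply: hF => // H sH; rewrite leq_eqVlt ltnS leqn0.
  case/orP => [/cards1P [C defH] | /eqP /cards0_eq ->]; last by exists a => ?; rewrite inE.
  have : C \in [set A; B] by apply: (subsetP sH); rewrite defH set11.
  rewrite defH => /set2P [] ->.
    by exists a => ? /set1P ->.
  by exists b => ? /set1P ->.
by apply/set0Pn; exists x; rewrite inE !hx ?set21 ?set22.
Qed.

End HellyProperty.

Section MaximalIndependentSets.
Variables (V : finType) (e : rel V).
Implicit Types (S I : {set V}) (F : {set {set V}}).

Lemma independentP S : reflect {in S &, forall x y, ~~ e x y} (independent e S).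
Proof.
apply: (iffP forall_inP) => [hS x y xS | hS x xS]; first by move/forall_inP: (hS x xS); apply.
by apply/forall_inP => y; apply: hS.
Qed.

Lemma independentS S I : S \subset I -> independent e I -> independent e S.
Proof.
move=> sSI /independentP hI; apply/independentP => x y xS yS.
by apply: hI; apply: (subsetP sSI).
Qed.

Lemma independent_set1 x : ~~ e x x -> independent e [set x].
Proof. by move=> exx; apply/independentP => ? ? /set1P -> /set1P ->. Qed.

Lemma independent_cover F :
  {in F &, forall S1 S2, independent e (S1 :|: S2)} -> independent e (cover F).
Proof.
move=> hF; apply/independentP => x y /bigcupP [S1 S1F xS1] /bigcupP [S2 S2F yS2].
by move/independentP: (hF S1 S2 S1F S2F); apply; rewrite inE ?xS1 ?yS2 ?orbT.
Qed.

Lemma K_setU S1 S2 : K e (S1 :|: S2) = K e S1 :&: K e S2.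
Proof. by apply/setP => I; rewrite !inE subUset andbACA andbb. Qed.

Lemma K_subset S1 S2 : S1 \subset S2 -> K e S2 \subset K e S1.
Proof.
move=> sS12; apply/subsetP => I; rewrite !inE => /andP [-> sS2I].
exact: subset_trans sS2I.
Qed.

Lemma K_neq0 S : (K e S != set0) = independent e S.
Proof.
apply/set0Pn/idP => [[I] | /maxset_exists [I maxI sSI]].
  by rewrite !inE => /andP [/maxsetp indI sSI]; apply: independentS sSI indI.
by exists I; rewrite !inE maxI.
Qed.

Lemma Cfam_helly2 : helly_prop (Cfam e) 2.
Proof.
move=> Gs sGsC hGs; pose F := [set S | K e S \in Gs].
have indepF : independent e (cover F).
  apply: independent_cover => S1 S2; rewrite !inE => S1G S2G.
  rewrite -K_neq0 K_setU; apply/set0Pn.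
  have [I hI] : has_common_point [set K e S1; K e S2].
    apply: hGs; first by apply/subsetP => A /set2P [] ->.
    by rewrite cards2 ltnS leq_b1.
  by exists I; rewrite inE !hI ?set21 ?set22.
have /set0Pn [I IK] : K e (cover F) != set0 by rewrite K_neq0.
exists I => A AG; have /imsetP [S _ defA] := subsetP sGsC A AG.
rewrite defA; apply: subsetP IK; apply/K_subset/bigcup_sup.
by rewrite inE -defA.
Qed.

Lemma Cfam_not_helly1 u v : irreflexive e -> e u v -> ~ helly_prop (Cfam e) 1.
Proof.
move=> irr euv h1.
have K1C x : K e [set x] \in Cfam e by apply: imset_f.
have K1_neq0 x : K e [set x] != set0 by rewrite K_neq0 independent_set1 ?irr.
have := helly_prop1_meet h1 (K1C u) (K1C v) (K1_neq0 u) (K1_neq0 v).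
rewrite -K_setU K_neq0 => /independentP /(_ u v).
by rewrite !inE !eqxx orbT euv => /(_ isT isT).
Qed.

End MaximalIndependentSets.

Theorem proposition2p10 (V : finType) (e : rel V) :
  simple_graph e -> (exists u v : V, e u v) ->
  helly_number_is (Cfam e) 2.
Proof.
move=> [_ irr] [u [v euv]]; split; first exact: Cfam_helly2.
move=> h /helly_propW h1; rewrite leqNgt; apply/negP => h_lt2.
exact: Cfam_not_helly1 irr euv (h1 1 h_lt2).
Qed.
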